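(* Any finite union of rational convex polyhedra of positive codimension in $\mathbb{R}^n$ (in particular, the union of all cells of any rational polyhedral complex all of whose cells have positive codimension) coincides with a tropical prevariety in $\mathbb{R}^n$.
   Context: A rational convex polyhedron is a set defined by finitely many linear equations and non-strict linear inequalities with integer coefficients. A tropical polynomial $f$ in $n$ variables is a function $f(x)=\min\{L_1(x),\dots,L_m(x)\}$ on $\mathbb{R}^n$, where each $L_j(x)=\sum_{i=1}^n a_{ji}x_i+b_j$ has non-negative integer coefficients $a_{ji}$ and real constant term $b_j$. The tropical hypersurface $V(f)$ is the set of points where this piecewise-linear function is not smooth. A tropical prevariety is a set of the form $V(f_1)\cap\cdots\cap V(f_k)$ for finitely many tropical polynomials. *)

From HB Require Import structures.
From mathcomp Require Import all_boot all_order all_algebra.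
From mathcomp Require Import reals.
Set Implicit Arguments. Unset Strict Implicit. Unset Printing Implicit Defensive.
Import Order.TTheory GRing.Theory Num.Theory.
Local Open Scope ring_scope.

(* A linear constraint with integer coefficients: (a, c) encodes a . x  (?)  c. *)
Definition int_constraint (n : nat) := ({ffun 'I_n -> int} * int)%type.

(* A rational convex polyhedron is given by finitely many linear equations
   (first component) and non-strict linear inequalities (second component),
   all with integer coefficients. *)
Definition rat_polyhedron (n : nat) :=
  (seq (int_constraint n) * seq (int_constraint n))%type.

Definition int_form {R : realType} (n : nat) (a : {ffun 'I_n -> int}) (x : 'I_n -> R) : R :=
  \sum_(i < n) (a i)%:~R * x i.

Definition in_polyhedron {R : realType} (n : nat) (P : rat_polyhedron n) (x : 'I_n -> R) : Prop :=
  (forall e, e \in P.1 -> int_form e.1 x = (e.2)%:~R) /\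
  (forall e, e \in P.2 -> int_form e.1 x <= (e.2)%:~R).

(* Positive codimension: the affine hull of the set is a proper affine subspace
   of R^n, i.e. the set is contained in some affine hyperplane a . x = c, a <> 0. *)
Definition positive_codim {R : realType} (n : nat) (S : ('I_n -> R) -> Prop) : Prop :=
  exists (a : 'I_n -> R) (c : R), (exists i, a i != 0) /\
    forall x, S x -> \sum_(i < n) a i * x i = c.

Definition trop_term (R : realType) (n : nat) := ({ffun 'I_n -> nat} * R)%type.

Definition eval_term {R : realType} (n : nat) (t : trop_term R n) (x : 'I_n -> R) : R :=
  \sum_(i < n) (t.1 i)%:R * x i + t.2.

Definition trop_poly (R : realType) (n : nat) := seq (trop_term R n).

Definition trop_eval {R : realType} (n : nat) (f : trop_poly R n) (x : 'I_n -> R) : R :=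
  match f with
  | [::] => 0
  | t :: ts => foldr (fun s acc => Num.min (eval_term s x) acc) (eval_term t x) ts
  end.

(* A function g : R^n -> R is smooth at x if it is C^oo on a neighbourhood of x.
   For the piecewise-linear functions considered here this means that g agrees
   with an affine function on a neighbourhood of x. *)
Definition pl_smooth_at {R : realType} (n : nat) (g : ('I_n -> R) -> R) (x : 'I_n -> R) : Prop :=
  exists (e : R) (a : 'I_n -> R) (b : R), 0 < e /\
    forall y, (forall i, `|y i - x i| < e) -> g y = \sum_(i < n) a i * y i + b.

Definition trop_hypersurface {R : realType} (n : nat) (f : trop_poly R n) (x : 'I_n -> R) : Prop :=
  ~ pl_smooth_at (trop_eval f) x.

Definition trop_prevariety {R : realType} (n : nat) (fs : seq (trop_poly R n)) (x : 'I_n -> R) : Prop :=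
  forall f, f \in fs -> trop_hypersurface f x.

From HB Require Import structures.
From mathcomp Require Import all_boot all_order all_algebra.
From mathcomp Require Import reals ring lra.
From Stdlib Require Import Classical.
Import Order.TTheory GRing.Theory Num.Theory.
Local Open Scope ring_scope.
Set Implicit Arguments. Unset Strict Implicit.

(* A tropical polynomial fails to be smooth exactly where its minimum is attained by two
   terms with different exponent vectors, and this corner locus of a tropical product is the
   union of the corner loci of the factors; so multiplying the polynomials of two prevarieties
   pairwise yields a prevariety for their union.  It remains to treat one polyhedron P of
   positive codimension.  Such a P lies in a hyperplane h . x = c with h integral (otherwise
   a relative-interior point could be moved inside P in the direction of any coordinate).
   Writing h = h+ - h- and r = r+ - r- with nonnegative parts, the hyperplane is the corner
   locus of min(h+ . x, h- . x + c), and on it each constraint r . x <= b of P is the corner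
   locus of min(h+ . x + r+ . x, h- . x + r+ . x + c, h+ . x + r- . x + b), whose first two
   terms coincide there. *)

Section SmallEnough.
Variable R : realFieldType.

Definition small_enough (Q : R -> Prop) : Prop :=
  exists2 e : R, 0 < e & forall d, 0 < d -> d <= e -> Q d.

Lemma small_enough_all (T : eqType) (s : seq T) (Q : T -> R -> Prop) :
  (forall r, r \in s -> small_enough (Q r)) ->
  small_enough (fun d => forall r, r \in s -> Q r d).
Proof.
elim: s => [|r s IHs] Qs; first by exists 1.
have [e e0 Qe] := IHs (fun r' sr' => Qs r' (mem_behead (s := r :: s) sr')).
have [e' e'0 Qe'] := Qs r (mem_head r s).
exists (Num.min e e'); first by rewrite lt_min e0 e'0.
move=> d d0; rewrite le_min => /andP[de de'] r'.
by rewrite inE => /predU1P[->|sr']; [apply: Qe' | apply: Qe].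
Qed.

Lemma small_enough_mul_le (K s : R) : 0 < s -> small_enough (fun d => K * d <= s).
Proof.
move=> s0; have K1 : 0 < `|K| + 1 by rewrite ltr_wpDl.
exists (s / (`|K| + 1)) => [|d d0 de]; first by rewrite divr_gt0.
have es : s / (`|K| + 1) * (`|K| + 1) = s by rewrite mulfVK ?gt_eqF.
have := ler_norm K; have := normr_ge0 K; nra.
Qed.

Lemma eq_of_le_mul_small (a b e : R) :
  0 < e -> (forall d, `|d| < e -> a * d <= b * d) -> a = b.
Proof.
move=> e0 le_ab; have e2 : 0 < e / 2 by rewrite divr_gt0.
have lt_e : `|e / 2| < e by rewrite gtr0_norm //; lra.
have := le_ab _ lt_e; have := le_ab (- (e / 2)); rewrite normrN => /(_ lt_e).
by rewrite !mulrN lerN2 !(ler_pM2r e2) => ba ab; apply/le_anti; rewrite ab ba.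
Qed.

End SmallEnough.

Section TropicalHypersurface.
Variables (R : realType) (n : nat).
Implicit Types (f g : trop_poly R n) (t u v w : trop_term R n) (x y : 'I_n -> R).

Lemma trop_eval_le f t x : t \in f -> trop_eval f x <= eval_term t x.
Proof.
case: f => [//|t0 ts]; elim: ts t => [|s ts IHts] t; first by rewrite inE => /eqP->.
rewrite !inE /= ge_min => /or3P[/eqP->|/eqP->|tts].
- by rewrite IHts ?orbT ?mem_head.
- by rewrite lexx.
- by rewrite IHts ?orbT // inE tts orbT.
Qed.

Lemma trop_eval_attained f x :
  f != [::] -> exists2 t, t \in f & trop_eval f x = eval_term t x.
Proof.
case: f => [//|t0 ts] _; elim: ts => [|s ts [t tf IHt]]; first by exists t0; rewrite ?inE.
move: IHt => /= ->; have [st|ts_lt] := leP (eval_term s x) (eval_term t x).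
- by exists s; rewrite ?min_l // !inE eqxx orbT.
- by exists t; rewrite ?min_r ?ltW //; move: tf; rewrite !inE => /orP[]->; rewrite ?orbT.
Qed.

Lemma eq_trop_evalP f t x : t \in f ->
  eval_term t x = trop_eval f x <-> forall t', t' \in f -> eval_term t x <= eval_term t' x.
Proof.
move=> tf; split=> [-> t'|t_min]; first exact: trop_eval_le.
apply/le_anti; rewrite trop_eval_le // andbT.
have [|t' t'f ->] := trop_eval_attained x (f := f); last exact: t_min.
by apply: contraTneq tf => ->.
Qed.

Definition trop_corner f x : Prop :=
  exists t1 t2, [/\ t1 \in f, t2 \in f, eval_term t1 x = trop_eval f x,
                   eval_term t2 x = trop_eval f x & t1.1 != t2.1].

Definition nat_form (p : {ffun 'I_n -> nat}) x : R := \sum_(i < n) (p i)%:R * x i.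

Lemma eval_termE t x : eval_term t x = nat_form t.1 x + t.2.
Proof. by []. Qed.

Definition shift x (i : 'I_n) (d : R) : 'I_n -> R := fun j => x j + (j == i)%:R * d.

Lemma linear_form_shift (c : 'I_n -> R) x i d :
  \sum_(j < n) c j * shift x i d j = \sum_(j < n) c j * x j + c i * d.
Proof.
under eq_bigr => j _ do rewrite mulrDr.
rewrite big_split /=; congr (_ + _).
rewrite (bigD1 i) //= eqxx mul1r big1 ?addr0 // => j /negbTE->.
by rewrite mul0r mulr0.
Qed.

Lemma eval_term_shift t x i d :
  eval_term t (shift x i d) = eval_term t x + (t.1 i)%:R * d.
Proof. by rewrite /eval_term linear_form_shift addrAC. Qed.

Lemma pl_smooth_slope f t x (a : 'I_n -> R) b e :
  0 < e -> (forall y, (forall j, `|y j - x j| < e) -> trop_eval f y = \sum_(j < n) a j * y j + b) ->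
  t \in f -> eval_term t x = trop_eval f x -> forall i, a i = (t.1 i)%:R.
Proof.
move=> e0 f_affine tf t_min i; apply: (eq_of_le_mul_small e0) => d de.
have near_shift : forall j, `|shift x i d j - x j| < e.
  by move=> j; rewrite /shift addrC addKr; case: (j == i); rewrite ?mul1r ?mul0r ?normr0.
have near_x : forall j, `|x j - x j| < e by move=> j; rewrite subrr normr0.
have := trop_eval_le (shift x i d) tf.
by rewrite f_affine // eval_term_shift t_min f_affine // linear_form_shift addrAC lerD2l.
Qed.

Lemma trop_corner_not_smooth f x : trop_corner f x -> trop_hypersurface f x.
Proof.
move=> [t1 [t2 [t1f t2f t1_min t2_min t12]]] [e [a [b [e0 f_affine]]]].
have slope1 := pl_smooth_slope e0 f_affine t1f t1_min.
have slope2 := pl_smooth_slope e0 f_affine t2f t2_min.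
move/negP: t12; apply; apply/eqP/ffunP => i.
by apply/eqP; rewrite -(eqr_nat R) -slope1 slope2.
Qed.

Lemma eval_term_lipschitz t x y (e : R) : (forall j, `|y j - x j| < e) ->
  `|eval_term t y - eval_term t x| <= (\sum_(j < n) (t.1 j)%:R) * e.
Proof.
move=> yx; rewrite /eval_term opprD addrACA subrr addr0 -sumrB mulr_suml.
apply: le_trans (ler_norm_sum _ _ _) _; apply: ler_sum => j _.
by rewrite -mulrBr normrM ger0_norm // ler_wpM2l // ltW.
Qed.

Lemma eval_term_le_near t t' x : eval_term t x < eval_term t' x ->
  small_enough (fun e => forall y, (forall j, `|y j - x j| < e) -> eval_term t y <= eval_term t' y).
Proof.
rewrite -subr_gt0 => gap0.
have [e e0 Ke] := small_enough_mul_le (\sum_(j < n) (t.1 j)%:R + \sum_(j < n) (t'.1 j)%:R) gap0.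
exists e => // d d0 de y yx; have := Ke d d0 de.
have := eval_term_lipschitz t yx; have := eval_term_lipschitz t' yx.
rewrite !ler_norml mulrDl; lra.
Qed.

Lemma not_trop_corner_smooth f x :
  f != [::] -> ~ trop_corner f x -> pl_smooth_at (trop_eval f) x.
Proof.
move=> f0 no_corner; have [t tf t_min] := trop_eval_attained x f0.
have t_le_near : forall t', t' \in f -> small_enough (fun e =>
    forall y, (forall j, `|y j - x j| < e) -> eval_term t y <= eval_term t' y).
  move=> t' t'f; have [same|] := eqVneq t.1 t'.1.
    exists 1 => // d _ _ y _; rewrite !eval_termE same lerD2l.
    by have := trop_eval_le x t'f; rewrite t_min !eval_termE same lerD2l.
  move=> t12; apply: eval_term_le_near; rewrite lt_neqAle -t_min trop_eval_le // andbT.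
  by apply: contra_not_neq no_corner => t'_min; exists t, t'; rewrite -t'_min.
have [e e0 near] := small_enough_all t_le_near.
exists e, (fun j => (t.1 j)%:R), t.2; split=> // y yx.
apply/le_anti; rewrite trop_eval_le //=.
by have [t' t'f ->] := trop_eval_attained y f0; apply: (near e).
Qed.

Lemma trop_hypersurfaceE f x : f != [::] -> trop_hypersurface f x <-> trop_corner f x.
Proof.
move=> f0; split; last exact: trop_corner_not_smooth.
by move=> not_smooth; apply: NNPP => /(not_trop_corner_smooth f0).
Qed.

End TropicalHypersurface.

Lemma ffun_addIn (aT : finType) (p q r : {ffun aT -> nat}) : p + r = q + r -> p = q.
Proof. by move=> /ffunP pq; apply/ffunP => i; move: (pq i); rewrite !ffunE => /addIn. Qed.

Section TropicalProduct.
Variables (R : realType) (n : nat).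
Implicit Types (f g : trop_poly R n) (t u : trop_term R n) (x : 'I_n -> R).
Implicit Types (A B : seq (trop_poly R n)).

Definition term_mul t u : trop_term R n := (t.1 + u.1, t.2 + u.2).

Definition trop_mul f g : trop_poly R n := [seq term_mul t u | t <- f, u <- g].

Lemma eval_term_mul t u x : eval_term (term_mul t u) x = eval_term t x + eval_term u x.
Proof.
rewrite /eval_term /=; under eq_bigr => i _ do rewrite ffunE natrD mulrDl.
by rewrite big_split /= addrACA.
Qed.

Lemma trop_mul_neq0 f g : f != [::] -> g != [::] -> trop_mul f g != [::].
Proof. by case: f => // t f _; case: g. Qed.

Lemma trop_eval_mul f g x : f != [::] -> g != [::] ->
  trop_eval (trop_mul f g) x = trop_eval f x + trop_eval g x.
Proof.
move=> f0 g0; apply/le_anti/andP; split.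
- have [t tf ->] := trop_eval_attained x f0; have [u ug ->] := trop_eval_attained x g0.
  by rewrite -eval_term_mul trop_eval_le // allpairs_f.
- have [_ /allpairsP[[t u] /= [tf ug ->]] ->] := trop_eval_attained x (trop_mul_neq0 f0 g0).
  by rewrite eval_term_mul lerD // trop_eval_le.
Qed.

Lemma trop_corner_mull f g x : g != [::] -> trop_corner f x -> trop_corner (trop_mul f g) x.
Proof.
move=> g0 [t1 [t2 [t1f t2f t1_min t2_min t12]]]; have f0 : f != [::] by apply: contraTneq t1f => ->.
have [u ug u_min] := trop_eval_attained x g0.
exists (term_mul t1 u), (term_mul t2 u).
rewrite !allpairs_f // trop_eval_mul // !eval_term_mul t1_min t2_min u_min.
by split=> //; apply: contra_neq t12 => /ffun_addIn.
Qed.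

Lemma trop_corner_mulr f g x : f != [::] -> trop_corner g x -> trop_corner (trop_mul f g) x.
Proof.
move=> f0 [u1 [u2 [u1g u2g u1_min u2_min u12]]]; have g0 : g != [::] by apply: contraTneq u1g => ->.
have [t tf t_min] := trop_eval_attained x f0.
exists (term_mul t u1), (term_mul t u2).
rewrite !allpairs_f // trop_eval_mul // !eval_term_mul u1_min u2_min t_min.
by split=> //; apply: contra_neq u12; rewrite /= ![t.1 + _]addrC => /ffun_addIn.
Qed.

Lemma trop_corner_mul f g x : f != [::] -> g != [::] ->
  trop_corner (trop_mul f g) x <-> trop_corner f x \/ trop_corner g x.
Proof.
move=> f0 g0; split=> [|[]]; [|exact: trop_corner_mull|exact: trop_corner_mulr].
move=> [_ [_ [/allpairsP[[t1 u1] /= [t1f u1g ->]] /allpairsP[[t2 u2] /= [t2f u2g ->]]]]].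
rewrite trop_eval_mul // !eval_term_mul => min1 min2 t12.
(* a sum of terms can only reach the sum of the minima if each summand is minimal *)
have := trop_eval_le x t1f; have := trop_eval_le x u1g.
have := trop_eval_le x t2f; have := trop_eval_le x u2g => le_u2 le_t2 le_u1 le_t1.
have [same_t|] := eqVneq t1.1 t2.1; last by left; exists t1, t2; split=> //; lra.
have [same_u|] := eqVneq u1.1 u2.1; last by right; exists u1, u2; split=> //; lra.
by move: t12; rewrite /= same_t same_u eqxx.
Qed.

Definition corner_prevariety A x : Prop := forall f, f \in A -> trop_corner f x.

Definition trop_mul_pairs A B : seq (trop_poly R n) := [seq trop_mul f g | f <- A, g <- B].

Lemma trop_mul_pairs_neq0 A B :
  [::] \notin A -> [::] \notin B -> [::] \notin trop_mul_pairs A B.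
Proof.
move=> /memPn A0 /memPn B0; apply/allpairsP => -[[f g] /= [fA gB fg]].
by have /eqP[] := trop_mul_neq0 (A0 f fA) (B0 g gB).
Qed.

Lemma corner_prevariety_mul_pairs A B x : [::] \notin A -> [::] \notin B ->
  corner_prevariety (trop_mul_pairs A B) x <-> corner_prevariety A x \/ corner_prevariety B x.
Proof.
move=> /memPn A0 /memPn B0; split=> [AB|AB _ /allpairsP[[f g] /= [fA gB ->]]]; last first.
  by apply/(trop_corner_mul _ (A0 f fA) (B0 g gB)); case: AB => [Af|Bg]; [left|right]; auto.
have [|A_fails] := classic (corner_prevariety A x); first by left.
right=> g gB; have [f fA not_f] : exists2 f, f \in A & ~ trop_corner f x.
  by apply: NNPP => none; apply: A_fails => f fA; apply: NNPP => not_f; apply: none; exists f.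
by have /(trop_corner_mul _ (A0 f fA) (B0 g gB))[] := AB _ (allpairs_f trop_mul fA gB).
Qed.

End TropicalProduct.

Definition pos_part (z : int) : nat := if z is Posz k then k else 0.
Definition neg_part (z : int) : nat := if z is Negz k then k.+1 else 0.

Lemma pos_partB_neg_part (R : pzRingType) (z : int) :
  (pos_part z)%:R - (neg_part z)%:R = z%:~R :> R.
Proof. by case: z => k /=; rewrite ?subr0 // NegzE intrN sub0r. Qed.

Lemma pos_part_neg_part_eq (z : int) : pos_part z = neg_part z -> z = 0.
Proof. by case: z => [[]|]. Qed.

Section HyperplanesAndHalfspaces.
Variables (R : realType) (n : nat).
Implicit Types (t u v w : trop_term R n) (x : 'I_n -> R) (h : {ffun 'I_n -> int}).

Lemma trop_corner_single t x : ~ trop_corner [:: t] x.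
Proof. by move=> [t1 [t2 []]]; rewrite !inE => /eqP-> /eqP->; rewrite eqxx. Qed.

Lemma trop_corner_pair u v x :
  u.1 != v.1 -> trop_corner [:: u; v] x <-> eval_term u x = eval_term v x.
Proof.
move=> uv; have uf : u \in [:: u; v] by rewrite mem_head.
have vf : v \in [:: u; v] by rewrite !inE eqxx orbT.
have := trop_eval_le x uf; have := trop_eval_le x vf => le_v le_u; split.
  move=> [t1 [t2 [t1f t2f min1 min2 t12]]]; move: t1f t2f t12 min1 min2.
  by rewrite !inE => /orP[]/eqP-> /orP[]/eqP->; rewrite ?eqxx // => _; lra.
move=> uv_eq; exists u, v; split=> //; apply/eq_trop_evalP => // t;
  by rewrite !inE => /orP[]/eqP->; lra.
Qed.

Lemma trop_corner_triple u v w x : u.1 != v.1 -> eval_term u x = eval_term v x ->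
  trop_corner [:: u; v; w] x <-> eval_term u x <= eval_term w x.
Proof.
move=> uv uv_eq; have uf : u \in [:: u; v; w] by rewrite mem_head.
have vf : v \in [:: u; v; w] by rewrite !inE eqxx orbT.
have wf : w \in [:: u; v; w] by rewrite !inE eqxx !orbT.
have := trop_eval_le x uf; have := trop_eval_le x wf => le_w le_u; split.
  move=> [t1 [t2 [t1f t2f min1 min2 t12]]]; move: t1f t2f t12 min1 min2.
  by rewrite !inE => /or3P[]/eqP-> /or3P[]/eqP->; rewrite ?eqxx // => _; lra.
move=> uw; exists u, v; split=> //; rewrite -?uv_eq; apply/eq_trop_evalP => // t;
  by rewrite !inE => /or3P[]/eqP->; lra.
Qed.

Lemma nat_formD (p q : {ffun 'I_n -> nat}) x : nat_form (p + q) x = nat_form p x + nat_form q x.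
Proof. by rewrite -big_split; apply: eq_bigr => i _; rewrite ffunE natrD mulrDl. Qed.

Definition vpos h : {ffun 'I_n -> nat} := [ffun i => pos_part (h i)].
Definition vneg h : {ffun 'I_n -> nat} := [ffun i => neg_part (h i)].

Lemma nat_form_vposB_vneg h x : nat_form (vpos h) x - nat_form (vneg h) x = int_form h x.
Proof.
rewrite -sumrB; apply: eq_bigr => i _.
by rewrite !ffunE -mulrBl pos_partB_neg_part.
Qed.

Lemma vpos_neq_vneg h : h != 0 -> vpos h != vneg h.
Proof.
apply: contra_neq => /ffunP hE; apply/ffunP => i.
by have := hE i; rewrite !ffunE => /pos_part_neg_part_eq.
Qed.

Definition trop_hyperplane h (c : int) : trop_poly R n := [:: (vpos h, 0); (vneg h, c%:~R)].

Definition trop_halfspace h (c : int) (r : int_constraint n) : trop_poly R n :=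
  [:: (vpos h + vpos r.1, 0); (vneg h + vpos r.1, c%:~R); (vpos h + vneg r.1, r.2%:~R)].

Lemma trop_corner_hyperplane h c x :
  h != 0 -> trop_corner (trop_hyperplane h c) x <-> int_form h x = c%:~R.
Proof.
move=> h0; rewrite trop_corner_pair ?vpos_neq_vneg // !eval_termE /=.
by have := nat_form_vposB_vneg h x; split; lra.
Qed.

Lemma trop_corner_halfspace h c r x : h != 0 -> int_form h x = c%:~R ->
  trop_corner (trop_halfspace h c r) x <-> int_form r.1 x <= r.2%:~R.
Proof.
move=> h0 hx; have := nat_form_vposB_vneg h x; have := nat_form_vposB_vneg r.1 x.
rewrite hx => rE hE; rewrite trop_corner_triple /= ?eval_termE /= ?nat_formD.
- by split; lra.
- by apply: contra_neq (vpos_neq_vneg h0) => /ffun_addIn.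
- lra.
Qed.

End HyperplanesAndHalfspaces.

Section Polyhedra.
Variables (R : realType) (n : nat).
Implicit Types (P : rat_polyhedron n) (e r : int_constraint n) (x y : 'I_n -> R).

Lemma int_form_shift (g : {ffun 'I_n -> int}) x i d :
  int_form g (shift x i d) = int_form g x + (g i)%:~R * d.
Proof. exact: (linear_form_shift (fun j => (g j)%:~R)). Qed.

Lemma int_form_midpoint (g : {ffun 'I_n -> int}) x y :
  int_form g (fun j => (x j + y j) / 2) = (int_form g x + int_form g y) / 2.
Proof. by rewrite /int_form -big_split mulr_suml; apply: eq_bigr => j _ /=; ring. Qed.

Lemma int_form_opp (g : {ffun 'I_n -> int}) x : int_form (- g) x = - int_form g x.
Proof. by rewrite /int_form -sumrN; apply: eq_bigr => i _; rewrite ffunE intrN mulNr. Qed.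

Lemma in_polyhedron_midpoint P x y : in_polyhedron P x -> in_polyhedron P y ->
  in_polyhedron P (fun j => (x j + y j) / 2).
Proof.
move=> [Px_eq Px_le] [Py_eq Py_le]; split=> e eP; rewrite int_form_midpoint.
  by rewrite Px_eq // Py_eq //; lra.
by have := Px_le e eP; have := Py_le e eP; lra.
Qed.

Definition constraint_opp e : int_constraint n := (- e.1, - e.2).

Definition polyhedron_ineqs P : seq (int_constraint n) :=
  P.2 ++ P.1 ++ map constraint_opp P.1.

Lemma in_polyhedron_ineqs P x :
  in_polyhedron P x <-> forall r, r \in polyhedron_ineqs P -> int_form r.1 x <= r.2%:~R.
Proof.
have opp_le e : int_form (constraint_opp e).1 x <= (constraint_opp e).2%:~R =
                (e.2%:~R <= int_form e.1 x).
  by rewrite int_form_opp intrN lerN2.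
split=> [[P_eq P_le] r|P_le].
  rewrite !mem_cat => /or3P[/P_le //|/P_eq-> //|/mapP[e /P_eq xe ->]].
  by rewrite opp_le xe.
split=> [e eP|r rP]; last by apply: P_le; rewrite mem_cat rP.
apply/le_anti; rewrite P_le ?mem_cat ?eP ?orbT //= -opp_le P_le //.
by rewrite !mem_cat map_f ?orbT.
Qed.

Lemma polyhedron_strict_point P (s : seq (int_constraint n)) x1 :
  in_polyhedron P x1 -> {subset s <= P.2} ->
  (forall r, r \in s -> exists2 y : 'I_n -> R, in_polyhedron P y & int_form r.1 y < r.2%:~R) ->
  exists2 x0 : 'I_n -> R, in_polyhedron P x0 & forall r, r \in s -> int_form r.1 x0 < r.2%:~R.
Proof.
move=> Px1; elim: s => [|r s IHs] sP strict_somewhere; first by exists x1.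
have [x0 Px0 x0_strict] := IHs (fun r' sr' => sP r' (mem_behead (s := r :: s) sr'))
  (fun r' sr' => strict_somewhere r' (mem_behead (s := r :: s) sr')).
have [y Py y_strict] := strict_somewhere r (mem_head r s).
exists (fun j => (x0 j + y j) / 2); first exact: in_polyhedron_midpoint.
move=> r'; rewrite inE int_form_midpoint => /predU1P[->|sr'].
  by have := Px0.2 r (sP r (mem_head r s)); lra.
by have := x0_strict r' sr'; have := Py.2 r' (sP r' (mem_behead (s := r :: s) sr')); lra.
Qed.

Lemma polyhedron_shift P x0 i :
  in_polyhedron P x0 -> (forall e, e \in P.1 -> e.1 i = 0) ->
  (forall r, r \in P.2 -> r.1 i != 0 -> int_form r.1 x0 < r.2%:~R) ->
  exists2 d, 0 < d & in_polyhedron P (shift x0 i d).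
Proof.
move=> [P_eq P_le] eq_i strict_i.
have small r : r \in P.2 -> small_enough (fun d => int_form r.1 (shift x0 i d) <= r.2%:~R).
  move=> rP; have [ri0|ri] := eqVneq (r.1 i) 0.
    by exists 1 => // d _ _; rewrite int_form_shift ri0 mul0r addr0 P_le.
  have gap : 0 < r.2%:~R - int_form r.1 x0 by rewrite subr_gt0 strict_i.
  have [e e0 small_e] := small_enough_mul_le (r.1 i)%:~R gap.
  exists e => // d d0 de; have := small_e d d0 de.
  by rewrite int_form_shift; lra.
have [d d0 Pd] := small_enough_all small.
exists d => //; split=> [e eP|]; last exact: Pd.
by rewrite int_form_shift eq_i // mul0r addr0 P_eq.
Qed.

End Polyhedra.

Section CornerPrevarieties.
Variables (R : realType) (n : nat).
Implicit Types (P : rat_polyhedron n).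

(* If no constraint involving coordinate i were tight on all of P, a relative-interior point
   of P could be moved along e_i inside P, leaving every hyperplane a . x = c with a_i != 0. *)
Lemma int_hyperplane_of_positive_codim P :
  positive_codim (fun x : 'I_n -> R => in_polyhedron P x) ->
  exists (h : {ffun 'I_n -> int}) (c : int),
    h != 0 /\ forall x : 'I_n -> R, in_polyhedron P x -> int_form h x = c%:~R.
Proof.
move=> [a [c [[i ai] Pa]]]; apply: NNPP => no_hyperplane.
have not_tight (e : int_constraint n) : e.1 i != 0 ->
    ~ forall x : 'I_n -> R, in_polyhedron P x -> int_form e.1 x = e.2%:~R.
  move=> ei tight; apply: no_hyperplane; exists e.1, e.2; split=> //.
  by apply: contraNneq ei => ->; rewrite ffunE.
have [x1 Px1] : exists x1 : 'I_n -> R, in_polyhedron P x1.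
  apply: NNPP => empty; apply: (not_tight ([ffun j => (j == i)%:Z], 0%Z)).
    by rewrite ffunE eqxx.
  by move=> x Px; case: empty; exists x.
have eq_i e : e \in P.1 -> e.1 i = 0.
  by move=> eP; apply/eqP/negPn/negP => ei; apply: (not_tight e ei) => x [+ _]; apply.
pose s := [seq r : int_constraint n <- P.2 | r.1 i != 0].
have sP : {subset s <= P.2} by move=> r; rewrite mem_filter => /andP[].
have [|x0 Px0 strict] := polyhedron_strict_point Px1 sP.
  move=> r; rewrite mem_filter => /andP[ri rP]; apply: NNPP => never_strict.
  apply: (not_tight r ri) => x Px; apply/le_anti; rewrite Px.2 //= leNgt.
  by apply/negP => lt; apply: never_strict; exists x.
have [d d0 Pd] : exists2 d, 0 < d & in_polyhedron P (shift x0 i d).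
  by apply: polyhedron_shift eq_i _ => // r rP ri; apply: strict; rewrite mem_filter ri.
have := Pa _ Pd; rewrite linear_form_shift Pa // -[RHS]addr0 => /addrI/eqP.
by rewrite mulf_eq0 (negbTE ai) gt_eqF.
Qed.
Lemma corner_prevariety_of_polyhedron P :
  positive_codim (fun x : 'I_n -> R => in_polyhedron P x) ->
  exists fs : seq (trop_poly R n),
    [::] \notin fs /\ forall x, in_polyhedron P x <-> corner_prevariety fs x.
Proof.
move=> /int_hyperplane_of_positive_codim[h [c [h0 Ph]]].
exists (trop_hyperplane R h c :: map (trop_halfspace R h c) (polyhedron_ineqs P)).
split=> [|x]; first by rewrite inE; apply/norP; split=> //; apply/mapP => -[].
split=> [Px f|corner].
  rewrite inE => /predU1P[->|/mapP[r rP ->]]; first exact/trop_corner_hyperplane/Ph.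
  by apply/trop_corner_halfspace; [|exact: Ph|exact: (proj1 (in_polyhedron_ineqs P x) Px)].
have hx : int_form h x = c%:~R by apply/(trop_corner_hyperplane _ _ h0)/corner/mem_head.
apply/in_polyhedron_ineqs => r rP; apply/(trop_corner_halfspace r h0 hx)/corner.
by rewrite inE map_f ?orbT.
Qed.

Lemma corner_prevariety_of_union (Ps : seq (rat_polyhedron n)) :
  (forall P, P \in Ps -> positive_codim (fun x : 'I_n -> R => in_polyhedron P x)) ->
  exists fs : seq (trop_poly R n), [::] \notin fs /\
    forall x, (exists2 P, P \in Ps & in_polyhedron P x) <-> corner_prevariety fs x.
Proof.
elim: Ps => [|P Ps IHPs] codim.
  exists [:: [:: (0, 0)]]; split=> // x; split=> [[] //|corner].
  by case: (trop_corner_single (corner _ (mem_head _ _))).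
have [fs1 [fs1_0 E1]] := corner_prevariety_of_polyhedron (codim P (mem_head P Ps)).
have [fs2 [fs2_0 E2]] := IHPs (fun P' PPs => codim P' (mem_behead (s := P :: Ps) PPs)).
exists (trop_mul_pairs fs1 fs2); split=> [|x]; first exact: trop_mul_pairs_neq0.
rewrite corner_prevariety_mul_pairs // -E1 -E2; split.
  by move=> [P']; rewrite inE => /predU1P[->|P'Ps] Px; [left|right; exists P'].
by case=> [Px|[P' P'Ps Px]]; [exists P; rewrite ?mem_head|exists P'; rewrite ?inE ?P'Ps ?orbT].
Qed.

End CornerPrevarieties.

Unset Implicit Arguments.

Theorem corollary1p2 (R : realType) (n : nat) (Ps : seq (rat_polyhedron n)) :
  (forall P, P \in Ps -> positive_codim (fun x : 'I_n -> R => in_polyhedron P x)) ->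
  exists fs : seq (trop_poly R n),
    (forall f, f \in fs -> f != [::]) /\
    (forall x : 'I_n -> R,
       (exists2 P, P \in Ps & in_polyhedron P x) <-> trop_prevariety fs x).
Proof.
move=> /corner_prevariety_of_union[fs [/memPn fs0 E]].
exists fs; split=> // x; rewrite E.
by split=> V f ffs; apply/(trop_hypersurfaceE x (fs0 f ffs))/V.
Qed.
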